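(* For a finitely complete category $\mathbb E$, the following are equivalent: (1) for every object $X$, every internal group in the fiber $Pt_X\mathbb E$ is trivial (its underlying split epimorphism is an isomorphism); (2) every internal groupoid in $\mathbb E$ is an equivalence relation, i.e. for every internal groupoid with object of objects $X_0$ and object of arrows $X_1$, the morphism $(d_0,d_1):X_1\to X_0\times X_0$ is a monomorphism. Moreover, such a category has the property that every object carrying an internal associative Mal'tsev structure is a subobject of $1$.
   Context: $Pt_X\mathbb E$ is the category of triples $(A,f,s)$ with $f:A\to X$, $s:X\to A$, $fs=1_X$, morphisms commuting with $f$ and $s$; products are pullbacks over $X$ and the terminal object is $(X,1_X,1_X)$. An internal groupoid in $\mathbb E$ is an internal category (objects $X_0$, arrows $X_1$, domain/codomain $d_0,d_1$, identities, associative unital composition on $X_1\times_{X_0}X_1$) in which every arrow is invertible. An associative Mal'tsev structure on $X$ is $p:X^3\to X$ with $p(x,y,y)=x=p(y,y,x)$ and $p(x,y,p(z,u,v))=p(p(x,y,z),u,v)$. *)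

From Stdlib Require Import Setoid.

Set Implicit Arguments.
Unset Strict Implicit.

Record Category := {
  ob :> Type;
  hom : ob -> ob -> Type;
  idm : forall A, hom A A;
  cmp : forall A B D, hom B D -> hom A B -> hom A D;
  cmp_assoc : forall A B D E (h : hom D E) (g : hom B D) (f : hom A B),
      cmp h (cmp g f) = cmp (cmp h g) f;
  cmp_id_l : forall A B (f : hom A B), cmp (idm B) f = f;
  cmp_id_r : forall A B (f : hom A B), cmp f (idm A) = f }.

Arguments hom {c} _ _.
Arguments idm {c} A.
Arguments cmp {c A B D} _ _.
Arguments cmp_assoc {c A B D E} h g f.
Arguments cmp_id_l {c A B} f.
Arguments cmp_id_r {c A B} f.

Notation "g ∘ f" := (cmp g f) (at level 40, left associativity).

Unset Implicit Arguments.
Record FinLim (C : Category) := mkFinLim {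
  term : C;
  bang : forall A : C, hom A term;
  bang_uniq : forall (A : C) (f g : hom A term), f = g;
  pb : forall (A B D : C) (f : hom A D) (g : hom B D), C;
  pb1 : forall (A B D : C) (f : hom A D) (g : hom B D), hom (pb A B D f g) A;
  pb2 : forall (A B D : C) (f : hom A D) (g : hom B D), hom (pb A B D f g) B;
  pb_comm : forall (A B D : C) (f : hom A D) (g : hom B D),
      f ∘ pb1 A B D f g = g ∘ pb2 A B D f g;
  pb_pair : forall (A B D : C) (f : hom A D) (g : hom B D)
      (T : C) (u : hom T A) (v : hom T B), f ∘ u = g ∘ v -> hom T (pb A B D f g);
  pb_pair1 : forall (A B D : C) (f : hom A D) (g : hom B D)
      (T : C) (u : hom T A) (v : hom T B) (H : f ∘ u = g ∘ v),
      pb1 A B D f g ∘ pb_pair A B D f g T u v H = u;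
  pb_pair2 : forall (A B D : C) (f : hom A D) (g : hom B D)
      (T : C) (u : hom T A) (v : hom T B) (H : f ∘ u = g ∘ v),
      pb2 A B D f g ∘ pb_pair A B D f g T u v H = v;
  pb_uniq : forall (A B D : C) (f : hom A D) (g : hom B D)
      (T : C) (h k : hom T (pb A B D f g)),
      pb1 A B D f g ∘ h = pb1 A B D f g ∘ k ->
      pb2 A B D f g ∘ h = pb2 A B D f g ∘ k -> h = k }.

Set Implicit Arguments.
Arguments term {C} f0.
Arguments bang {C} f0 A.
Arguments bang_uniq {C} f0 {A} f g.
Arguments pb {C} f0 {A B D} f g.
Arguments pb1 {C} f0 {A B D} f g.
Arguments pb2 {C} f0 {A B D} f g.
Arguments pb_comm {C} f0 {A B D} f g.
Arguments pb_pair {C} f0 {A B D f g T u v} H.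

Section Defs.
Context {C : Category} (L : FinLim C).

Definition is_mono {A B : C} (m : hom A B) : Prop :=
  forall (T : C) (h k : hom T A), m ∘ h = m ∘ k -> h = k.

Definition is_iso {A B : C} (f : hom A B) : Prop :=
  exists g : hom B A, g ∘ f = idm A /\ f ∘ g = idm B.

Definition subterminal (X : C) : Prop := is_mono (bang L X).

Definition prod (A B : C) : C := pb L (bang L A) (bang L B).
Definition pr1 {A B : C} : hom (prod A B) A := pb1 L (bang L A) (bang L B).
Definition pr2 {A B : C} : hom (prod A B) B := pb2 L (bang L A) (bang L B).
Definition pairP {T A B : C} (u : hom T A) (v : hom T B) : hom T (prod A B) :=
  pb_pair L (bang_uniq L (bang L A ∘ u) (bang L B ∘ v)).

(* A point (A, f, s) over X together with a multiplication
   m : (A,f,s) x (A,f,s) -> (A,f,s) and an inverse i : (A,f,s) -> (A,f,s),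
   both morphisms of Pt_X.  The product (A,f,s) x (A,f,s) in Pt_X is the
   pullback A x_X A = pb f f with section <s,s>.  The unit
   (X,1,1) -> (A,f,s) of any internal monoid in Pt_X is necessarily s. *)
Record PtGroupData (X : C) := {
  pg_A : C;
  pg_f : hom pg_A X;
  pg_s : hom X pg_A;
  pg_fs : pg_f ∘ pg_s = idm X;
  pg_m : hom (pb L pg_f pg_f) pg_A;
  pg_i : hom pg_A pg_A;
  pg_fm : pg_f ∘ pg_m = pg_f ∘ pb1 L pg_f pg_f;
  pg_fi : pg_f ∘ pg_i = pg_f }.

Section PtGroup.
Context {X : C} (G : PtGroupData X).
Let A := pg_A G.
Let f := pg_f G.
Let s := pg_s G.
Let m := pg_m G.
Let i := pg_i G.
Let P2 := pb L f f.
Let p1 : hom P2 A := pb1 L f f.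
Let p2 : hom P2 A := pb2 L f f.
Let P3 := pb L (f ∘ p1) f.
Let q1 : hom P3 P2 := pb1 L (f ∘ p1) f.
Let q2 : hom P3 A := pb2 L (f ∘ p1) f.

Lemma pg_ss_ok : f ∘ s = f ∘ s.
Proof. reflexivity. Qed.

Lemma pg_mx1_ok : f ∘ (m ∘ q1) = f ∘ q2.
Proof.
  rewrite cmp_assoc. unfold f, m. rewrite pg_fm. exact (pb_comm L (f ∘ p1) f).
Qed.

Lemma pg_inner_ok : f ∘ (p2 ∘ q1) = f ∘ q2.
Proof.
  rewrite cmp_assoc. transitivity ((f ∘ p1) ∘ q1).
  - apply (f_equal (fun h => h ∘ q1)). symmetry. exact (pb_comm L f f).
  - exact (pb_comm L (f ∘ p1) f).
Qed.

Definition pg_inner : hom P3 P2 := pb_pair L pg_inner_ok.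

Lemma pg_1xm_ok : f ∘ (p1 ∘ q1) = f ∘ (m ∘ pg_inner).
Proof.
  symmetry.
  etransitivity. { apply cmp_assoc. }
  etransitivity. { apply (f_equal (fun h => h ∘ pg_inner)). exact (pg_fm G). }
  etransitivity. { symmetry. apply cmp_assoc. }
  etransitivity. { apply (f_equal (fun h => f ∘ h)). apply pb_pair1. }
  etransitivity. { apply cmp_assoc. }
  etransitivity. { apply (f_equal (fun h => h ∘ q1)). symmetry. exact (pb_comm L f f). }
  symmetry. apply cmp_assoc.
Qed.

(* m x 1 and (1 x m) o assoc, as maps P3 -> P2 *)
Definition pg_mx1 : hom P3 P2 := pb_pair L pg_mx1_ok.
Definition pg_1xm : hom P3 P2 := pb_pair L pg_1xm_ok.

Lemma pg_unitl_ok : f ∘ (s ∘ f) = f ∘ idm A.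
Proof. rewrite cmp_assoc. unfold f, s. rewrite pg_fs, cmp_id_l, cmp_id_r. reflexivity. Qed.
Lemma pg_unitr_ok : f ∘ idm A = f ∘ (s ∘ f).
Proof. symmetry. exact pg_unitl_ok. Qed.
Lemma pg_invl_ok : f ∘ i = f ∘ idm A.
Proof. rewrite cmp_id_r. exact (pg_fi G). Qed.
Lemma pg_invr_ok : f ∘ idm A = f ∘ i.
Proof. symmetry. exact pg_invl_ok. Qed.

Definition IsPtGroup : Prop :=
  (* m and i preserve the sections, i.e. are morphisms in Pt_X *)
  m ∘ pb_pair L pg_ss_ok = s /\
  i ∘ s = s /\
  m ∘ pg_mx1 = m ∘ pg_1xm /\
  m ∘ pb_pair L pg_unitl_ok = idm A /\
  m ∘ pb_pair L pg_unitr_ok = idm A /\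
  m ∘ pb_pair L pg_invl_ok = s ∘ f /\
  m ∘ pb_pair L pg_invr_ok = s ∘ f.
End PtGroup.

Definition AllPtGroupsTrivial : Prop :=
  forall (X : C) (G : PtGroupData X), IsPtGroup G -> is_iso (pg_f G).

(* X1 x_{X0} X1 = pb d1 d0 : pairs (a, b) with d1 a = d0 b, composite
   c(a,b) : d0 a -> d1 b. *)
Record GroupoidData := {
  gd_X0 : C;
  gd_X1 : C;
  gd_d0 : hom gd_X1 gd_X0;
  gd_d1 : hom gd_X1 gd_X0;
  gd_e : hom gd_X0 gd_X1;
  gd_c : hom (pb L gd_d1 gd_d0) gd_X1;
  gd_d0e : gd_d0 ∘ gd_e = idm gd_X0;
  gd_d1e : gd_d1 ∘ gd_e = idm gd_X0;
  gd_d0c : gd_d0 ∘ gd_c = gd_d0 ∘ pb1 L gd_d1 gd_d0;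
  gd_d1c : gd_d1 ∘ gd_c = gd_d1 ∘ pb2 L gd_d1 gd_d0 }.

Section Groupoid.
Context (G : GroupoidData).
Let X0 := gd_X0 G.
Let X1 := gd_X1 G.
Let d0 := gd_d0 G.
Let d1 := gd_d1 G.
Let e := gd_e G.
Let c := gd_c G.
Let P2 := pb L d1 d0.
Let p1 : hom P2 X1 := pb1 L d1 d0.
Let p2 : hom P2 X1 := pb2 L d1 d0.
Let P3 := pb L (d1 ∘ p2) d0.
Let q1 : hom P3 P2 := pb1 L (d1 ∘ p2) d0.
Let q2 : hom P3 X1 := pb2 L (d1 ∘ p2) d0.

Lemma gd_cx1_ok : d1 ∘ (c ∘ q1) = d0 ∘ q2.
Proof.
  rewrite cmp_assoc. unfold d1, c. rewrite gd_d1c. exact (pb_comm L (d1 ∘ p2) d0).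
Qed.
Lemma gd_inner_ok : d1 ∘ (p2 ∘ q1) = d0 ∘ q2.
Proof. rewrite cmp_assoc. exact (pb_comm L (d1 ∘ p2) d0). Qed.
Definition gd_inner : hom P3 P2 := pb_pair L gd_inner_ok.
Lemma gd_1xc_ok : d1 ∘ (p1 ∘ q1) = d0 ∘ (c ∘ gd_inner).
Proof.
  symmetry.
  etransitivity. { apply cmp_assoc. }
  etransitivity. { apply (f_equal (fun h => h ∘ gd_inner)). exact (gd_d0c G). }
  etransitivity. { symmetry. apply cmp_assoc. }
  etransitivity. { apply (f_equal (fun h => d0 ∘ h)). apply pb_pair1. }
  etransitivity. { apply cmp_assoc. }
  etransitivity. { apply (f_equal (fun h => h ∘ q1)). symmetry. exact (pb_comm L d1 d0). }
  symmetry. apply cmp_assoc.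
Qed.
Definition gd_cx1 : hom P3 P2 := pb_pair L gd_cx1_ok.
Definition gd_1xc : hom P3 P2 := pb_pair L gd_1xc_ok.

Lemma gd_unitl_ok : d1 ∘ (e ∘ d0) = d0 ∘ idm X1.
Proof. rewrite cmp_assoc. unfold d1, e. rewrite gd_d1e, cmp_id_l, cmp_id_r. reflexivity. Qed.
Lemma gd_unitr_ok : d1 ∘ idm X1 = d0 ∘ (e ∘ d1).
Proof. rewrite cmp_assoc. unfold d0, e. rewrite gd_d0e, cmp_id_l, cmp_id_r. reflexivity. Qed.

Lemma gd_invr_ok (i : hom X1 X1) (H0 : d0 ∘ i = d1) : d1 ∘ idm X1 = d0 ∘ i.
Proof. rewrite cmp_id_r. symmetry. exact H0. Qed.
Lemma gd_invl_ok (i : hom X1 X1) (H1 : d1 ∘ i = d0) : d1 ∘ i = d0 ∘ idm X1.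
Proof. rewrite cmp_id_r. exact H1. Qed.

Definition IsGroupoid : Prop :=
  c ∘ gd_cx1 = c ∘ gd_1xc /\
  c ∘ pb_pair L gd_unitl_ok = idm X1 /\
  c ∘ pb_pair L gd_unitr_ok = idm X1 /\
  exists (i : hom X1 X1) (H0 : d0 ∘ i = d1) (H1 : d1 ∘ i = d0),
    c ∘ pb_pair L (gd_invr_ok H0) = e ∘ d0 /\
    c ∘ pb_pair L (gd_invl_ok H1) = e ∘ d1.
End Groupoid.

Definition AllGroupoidsEqRel : Prop :=
  forall G : GroupoidData, IsGroupoid G ->
    is_mono (pairP (gd_d0 G) (gd_d1 G)).

Definition pair3 {T X : C} (a b c : hom T X) : hom T (prod X (prod X X)) :=
  pairP a (pairP b c).

Definition IsAssocMaltsev (X : C) (p : hom (prod X (prod X X)) X) : Prop :=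
  p ∘ pair3 pr1 pr2 pr2 = pr1 /\
  p ∘ pair3 pr1 pr1 pr2 = pr2 /\
  let x : hom (prod X (prod X (prod X (prod X X)))) X := pr1 in
  let y := pr1 ∘ pr2 in
  let z := pr1 ∘ pr2 ∘ pr2 in
  let u := pr1 ∘ pr2 ∘ pr2 ∘ pr2 in
  let v := pr2 ∘ pr2 ∘ pr2 ∘ pr2 in
  p ∘ pair3 x y (p ∘ pair3 z u v) = p ∘ pair3 (p ∘ pair3 x y z) u v.

End Defs.

(* A group in Pt_X is the same thing as a groupoid with object of objects X
   whose domain and codomain coincide; so if groupoids are equivalence
   relations, the underlying split epi of such a group is mono, hence iso.
   Conversely, the loops [d0 a = d1 a] of a groupoid form a group in Pt_X0;
   if it is trivial, every loop is an identity, and for parallel arrows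
   [h, k] the loop [h k^-1] gives [h = k].  Finally an associative Mal'tsev
   operation makes [pr1 : X x X -> X] a group in Pt_X, with
   [(x, a) (x, b) = (x, p(a, x, b))]; triviality of that group says that
   [pr1] is mono, i.e. that [X] is subterminal. *)

Section Pullbacks.
Context {C : Category} {L : FinLim C} {A B D : C} {f : hom A D} {g : hom B D}.

Lemma pb1_pair {T : C} {u : hom T A} {v : hom T B} (H : f ∘ u = g ∘ v) :
  pb1 L f g ∘ pb_pair L H = u.
Proof. apply pb_pair1. Qed.

Lemma pb2_pair {T : C} {u : hom T A} {v : hom T B} (H : f ∘ u = g ∘ v) :
  pb2 L f g ∘ pb_pair L H = v.
Proof. apply pb_pair2. Qed.

Lemma pb_ext {T : C} (h k : hom T (pb L f g)) :
  pb1 L f g ∘ h = pb1 L f g ∘ k -> pb2 L f g ∘ h = pb2 L f g ∘ k -> h = k.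
Proof. apply pb_uniq. Qed.

Lemma pb_pair_eta {T : C} (w : hom T (pb L f g))
  (H : f ∘ (pb1 L f g ∘ w) = g ∘ (pb2 L f g ∘ w)) : w = pb_pair L H.
Proof. apply pb_ext; rewrite ?pb1_pair, ?pb2_pair; reflexivity. Qed.

Lemma pb_pair_natural {T T' : C} {u : hom T A} {v : hom T B} (H : f ∘ u = g ∘ v)
  (t : hom T' T) {u' : hom T' A} {v' : hom T' B} (H' : f ∘ u' = g ∘ v') :
  u' = u ∘ t -> v' = v ∘ t -> pb_pair L H' = pb_pair L H ∘ t.
Proof.
  intros Hu Hv; apply pb_ext.
  - rewrite pb1_pair, cmp_assoc, pb1_pair; exact Hu.
  - rewrite pb2_pair, cmp_assoc, pb2_pair; exact Hv.
Qed.

Lemma pb_law_natural {Z T T' : C} {u : hom T A} {v : hom T B} (H : f ∘ u = g ∘ v)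
  (c : hom (pb L f g) Z) (r : hom T Z) (t : hom T' T)
  {u' : hom T' A} {v' : hom T' B} (H' : f ∘ u' = g ∘ v') :
  c ∘ pb_pair L H = r -> u' = u ∘ t -> v' = v ∘ t -> c ∘ pb_pair L H' = r ∘ t.
Proof.
  intros Hc Hu Hv. rewrite (pb_pair_natural H t H' Hu Hv), cmp_assoc, Hc. reflexivity.
Qed.

End Pullbacks.

Section Products.
Context {C : Category} {L : FinLim C} {A B : C}.

Lemma pr1_pair {T : C} (u : hom T A) (v : hom T B) : pr1 L ∘ pairP L u v = u.
Proof. apply pb_pair1. Qed.

Lemma pr2_pair {T : C} (u : hom T A) (v : hom T B) : pr2 L ∘ pairP L u v = v.
Proof. apply pb_pair2. Qed.

Lemma prod_ext {T : C} (h k : hom T (prod L A B)) :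
  pr1 L ∘ h = pr1 L ∘ k -> pr2 L ∘ h = pr2 L ∘ k -> h = k.
Proof. apply pb_uniq. Qed.

Lemma pair_comp {T T' : C} (u : hom T A) (v : hom T B) (t : hom T' T) :
  pairP L u v ∘ t = pairP L (u ∘ t) (v ∘ t).
Proof. apply prod_ext; rewrite cmp_assoc, ?pr1_pair, ?pr2_pair; reflexivity. Qed.

Lemma pair_inj {T : C} (u u' : hom T A) (v v' : hom T B) :
  pairP L u v = pairP L u' v' -> u = u' /\ v = v'.
Proof.
  intro Huv. split.
  - rewrite <- (pr1_pair u v), Huv. apply pr1_pair.
  - rewrite <- (pr2_pair u v), Huv. apply pr2_pair.
Qed.

End Products.

Section Monos.
Context {C : Category}.

Lemma mono_of_retraction {A B : C} (f : hom A B) (r : hom B A) :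
  r ∘ f = idm A -> is_mono f.
Proof.
  intros Hr T h k Hf.
  rewrite <- (cmp_id_l h), <- (cmp_id_l k), <- Hr, <- !cmp_assoc, Hf. reflexivity.
Qed.

Lemma iso_section_retraction {A B : C} (f : hom A B) (s : hom B A) :
  is_iso f -> f ∘ s = idm B -> s ∘ f = idm A.
Proof.
  intros [g [Hgf _]] Hfs.
  assert (Hg : g = s) by (rewrite <- (cmp_id_r g), <- Hfs, cmp_assoc, Hgf, cmp_id_l; reflexivity).
  rewrite <- Hg. exact Hgf.
Qed.

End Monos.

Section Laws.
Context {C : Category} (L : FinLim C).

(* Composites are passed as variables with defining equations, so that the
   composability proofs never have to mention them. *)
Record GroupoidLaws {X0 X1 : C} (d0 d1 : hom X1 X0) (e : hom X0 X1)
    (c : hom (pb L d1 d0) X1) (i : hom X1 X1) : Prop := {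
  law_assoc : forall T (a b k x y : hom T X1) (Hab : d1 ∘ a = d0 ∘ b)
      (Hbk : d1 ∘ b = d0 ∘ k) (Hx : d1 ∘ x = d0 ∘ k) (Hy : d1 ∘ a = d0 ∘ y),
      x = c ∘ pb_pair L Hab -> y = c ∘ pb_pair L Hbk ->
      c ∘ pb_pair L Hx = c ∘ pb_pair L Hy;
  law_id_l : forall T (a u : hom T X1) (H : d1 ∘ u = d0 ∘ a),
      u = e ∘ (d0 ∘ a) -> c ∘ pb_pair L H = a;
  law_id_r : forall T (a v : hom T X1) (H : d1 ∘ a = d0 ∘ v),
      v = e ∘ (d1 ∘ a) -> c ∘ pb_pair L H = a;
  law_inv_r : forall T (a v : hom T X1) (H : d1 ∘ a = d0 ∘ v),
      v = i ∘ a -> c ∘ pb_pair L H = e ∘ (d0 ∘ a);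
  law_inv_l : forall T (a u : hom T X1) (H : d1 ∘ u = d0 ∘ a),
      u = i ∘ a -> c ∘ pb_pair L H = e ∘ (d1 ∘ a) }.

Lemma groupoid_laws_of_pt_group {X : C} (G : PtGroupData L X) :
  IsPtGroup G -> GroupoidLaws (pg_f G) (pg_f G) (pg_s G) (pg_m G) (pg_i G).
Proof.
  intros [_ [_ [Has [Hul [Hur [Hil Hir]]]]]].
  destruct G as [A f s fs m i fm fi]; simpl in *.
  split.
  - intros T a b k x y Hab Hbk Hx Hy Ex Ey.
    assert (W : (f ∘ pb1 L f f) ∘ pb_pair L Hab = f ∘ k)
      by (rewrite <- cmp_assoc, pb1_pair, Hab; exact Hbk).
    rewrite (pb_law_natural _ m _ (pb_pair L W) Hx Has).
    + rewrite <- cmp_assoc. f_equal. symmetry. apply pb_pair_natural; simpl.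
      * rewrite <- cmp_assoc, !pb1_pair. reflexivity.
      * rewrite Ey, <- cmp_assoc. f_equal. apply pb_pair_natural; simpl.
        -- rewrite <- cmp_assoc, pb1_pair, pb2_pair. reflexivity.
        -- rewrite pb2_pair. reflexivity.
    + rewrite <- cmp_assoc, pb1_pair. exact Ex.
    + rewrite pb2_pair. reflexivity.
  - intros T a u H Eu.
    rewrite (pb_law_natural _ m _ a H Hul), cmp_id_l; [reflexivity | |].
    + rewrite Eu, cmp_assoc. reflexivity.
    + rewrite cmp_id_l. reflexivity.
  - intros T a v H Ev.
    rewrite (pb_law_natural _ m _ a H Hur), cmp_id_l; [reflexivity | |].
    + rewrite cmp_id_l. reflexivity.
    + rewrite Ev, cmp_assoc. reflexivity.
  - intros T a v H Ev.
    rewrite (pb_law_natural _ m _ a H Hir), cmp_assoc; [reflexivity | |].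
    + rewrite cmp_id_l. reflexivity.
    + exact Ev.
  - intros T a u H Eu.
    rewrite (pb_law_natural _ m _ a H Hil), cmp_assoc; [reflexivity | |].
    + exact Eu.
    + rewrite cmp_id_l. reflexivity.
Qed.

Lemma pt_group_of_groupoid_laws {X : C} (G : PtGroupData L X) :
  GroupoidLaws (pg_f G) (pg_f G) (pg_s G) (pg_m G) (pg_i G) -> IsPtGroup G.
Proof.
  intros [Eas Eul Eur Eir Eil].
  destruct G as [A f s fs m i fm fi]; simpl in *; unfold IsPtGroup; simpl.
  split; [|split; [|split; [|split; [|split; [|split]]]]].
  - apply Eul. rewrite fs, cmp_id_r. reflexivity.
  - assert (H : f ∘ (i ∘ s) = f ∘ s) by (rewrite cmp_assoc, fi; reflexivity).
    transitivity (m ∘ pb_pair L H).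
    + symmetry. apply Eur. rewrite (cmp_assoc f i s), fi, fs, cmp_id_r. reflexivity.
    + rewrite (Eil _ _ _ _ eq_refl), fs, cmp_id_r. reflexivity.
  - assert (Hab : f ∘ (pb1 L f f ∘ pb1 L (f ∘ pb1 L f f) f)
                = f ∘ (pb2 L f f ∘ pb1 L (f ∘ pb1 L f f) f))
      by (rewrite !cmp_assoc, (pb_comm L f f); reflexivity).
    eapply (Eas _ _ _ _ _ _ Hab); [f_equal; apply pb_pair_eta | reflexivity].
  - apply Eul. rewrite cmp_id_r. reflexivity.
  - apply Eur. rewrite cmp_id_r. reflexivity.
  - rewrite (Eil _ (idm A) i), cmp_id_r; [reflexivity|]. rewrite cmp_id_r. reflexivity.
  - rewrite (Eir _ (idm A) i), cmp_id_r; [reflexivity|]. rewrite cmp_id_r. reflexivity.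
Qed.

Lemma groupoid_laws_of_groupoid (G : GroupoidData L) : IsGroupoid G ->
  exists i, gd_d0 G ∘ i = gd_d1 G /\ gd_d1 G ∘ i = gd_d0 G /\
    GroupoidLaws (gd_d0 G) (gd_d1 G) (gd_e G) (gd_c G) i.
Proof.
  intros [Has [Hul [Hur [i [H0 [H1 [Hir Hil]]]]]]].
  exists i; split; [exact H0 | split; [exact H1 |]].
  destruct G as [X0 X1 d0 d1 e c d0e d1e d0c d1c]; simpl in *.
  split.
  - intros T a b k x y Hab Hbk Hx Hy Ex Ey.
    assert (W : (d1 ∘ pb2 L d1 d0) ∘ pb_pair L Hab = d0 ∘ k)
      by (rewrite <- cmp_assoc, pb2_pair; exact Hbk).
    rewrite (pb_law_natural _ c _ (pb_pair L W) Hx Has).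
    + rewrite <- cmp_assoc. f_equal. symmetry. apply pb_pair_natural; simpl.
      * rewrite <- cmp_assoc, !pb1_pair. reflexivity.
      * rewrite Ey, <- cmp_assoc. f_equal. apply pb_pair_natural; simpl.
        -- rewrite <- cmp_assoc, pb1_pair, pb2_pair. reflexivity.
        -- rewrite pb2_pair. reflexivity.
    + rewrite <- cmp_assoc, pb1_pair. exact Ex.
    + rewrite pb2_pair. reflexivity.
  - intros T a u H Eu.
    rewrite (pb_law_natural _ c _ a H Hul), cmp_id_l; [reflexivity | |].
    + rewrite Eu, cmp_assoc. reflexivity.
    + rewrite cmp_id_l. reflexivity.
  - intros T a v H Ev.
    rewrite (pb_law_natural _ c _ a H Hur), cmp_id_l; [reflexivity | |].
    + rewrite cmp_id_l. reflexivity.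
    + rewrite Ev, cmp_assoc. reflexivity.
  - intros T a v H Ev.
    rewrite (pb_law_natural _ c _ a H Hir), cmp_assoc; [reflexivity | |].
    + rewrite cmp_id_l. reflexivity.
    + exact Ev.
  - intros T a u H Eu.
    rewrite (pb_law_natural _ c _ a H Hil), cmp_assoc; [reflexivity | |].
    + exact Eu.
    + rewrite cmp_id_l. reflexivity.
Qed.

Lemma groupoid_of_groupoid_laws (G : GroupoidData L) (i : hom (gd_X1 G) (gd_X1 G))
  (H0 : gd_d0 G ∘ i = gd_d1 G) (H1 : gd_d1 G ∘ i = gd_d0 G) :
  GroupoidLaws (gd_d0 G) (gd_d1 G) (gd_e G) (gd_c G) i -> IsGroupoid G.
Proof.
  intros [Eas Eul Eur Eir Eil].
  destruct G as [X0 X1 d0 d1 e c d0e d1e d0c d1c]; simpl in *.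
  split; [|split; [|split]].
  - assert (Hab : d1 ∘ (pb1 L d1 d0 ∘ pb1 L (d1 ∘ pb2 L d1 d0) d0)
                = d0 ∘ (pb2 L d1 d0 ∘ pb1 L (d1 ∘ pb2 L d1 d0) d0))
      by (rewrite !cmp_assoc, (pb_comm L d1 d0); reflexivity).
    eapply (Eas _ _ _ _ _ _ Hab); [f_equal; apply pb_pair_eta | reflexivity].
  - apply Eul. rewrite cmp_id_r. reflexivity.
  - apply Eur. rewrite cmp_id_r. reflexivity.
  - exists i, H0, H1. split.
    + rewrite (Eir _ (idm X1) i), cmp_id_r; [reflexivity|]. rewrite cmp_id_r. reflexivity.
    + rewrite (Eil _ (idm X1) i), cmp_id_r; [reflexivity|]. rewrite cmp_id_r. reflexivity.
Qed.

End Laws.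

Section Loops.
Context {C : Category} (L : FinLim C) {X0 X1 : C} (d0 d1 : hom X1 X0)
  (e : hom X0 X1) (c : hom (pb L d1 d0) X1) (i : hom X1 X1)
  (d0e : d0 ∘ e = idm X0) (d1e : d1 ∘ e = idm X0)
  (d0c : d0 ∘ c = d0 ∘ pb1 L d1 d0) (d1c : d1 ∘ c = d1 ∘ pb2 L d1 d0)
  (d0i : d0 ∘ i = d1) (d1i : d1 ∘ i = d0) (E : GroupoidLaws L d0 d1 e c i).

Local Notation diag := (pairP L (idm X0) (idm X0)).
Local Notation Loops := (pb L (pairP L d0 d1) diag).
Local Notation incl := (pb1 L (pairP L d0 d1) diag).
Local Notation base := (pb2 L (pairP L d0 d1) diag).

Lemma parallel_factors_diag {T : C} (l : hom T X1) (x : hom T X0) :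
  d0 ∘ l = x -> d1 ∘ l = x -> pairP L d0 d1 ∘ l = diag ∘ x.
Proof. intros; rewrite !pair_comp, !cmp_id_l; f_equal; assumption. Qed.

Lemma d0_d1_incl : d0 ∘ incl = base /\ d1 ∘ incl = base.
Proof.
  apply (pair_inj (L := L)). rewrite <- pair_comp, pb_comm, pair_comp, !cmp_id_l. reflexivity.
Qed.

Lemma d0_incl : d0 ∘ incl = base.
Proof. apply d0_d1_incl. Qed.

Lemma d1_incl : d1 ∘ incl = base.
Proof. apply d0_d1_incl. Qed.

Lemma incl_mono : is_mono incl.
Proof.
  intros T a b K. apply pb_ext; [exact K|].
  rewrite <- d0_incl, <- !cmp_assoc, K. reflexivity.
Qed.

Definition loop_unit : hom X0 Loops := pb_pair L (parallel_factors_diag e (idm X0) d0e d1e).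

Lemma incl_unit {T : C} (x : hom T X0) : incl ∘ (loop_unit ∘ x) = e ∘ x.
Proof. rewrite cmp_assoc. unfold loop_unit. rewrite pb1_pair. reflexivity. Qed.

Lemma loops_composable {T : C} (a b : hom T Loops) :
  base ∘ a = base ∘ b -> d1 ∘ (incl ∘ a) = d0 ∘ (incl ∘ b).
Proof. intro K. rewrite !cmp_assoc, d0_incl, d1_incl. exact K. Qed.

Local Notation loop_comp :=
  (c ∘ pb_pair L (loops_composable _ _ (pb_comm L base base))).

Lemma d0_loop_comp : d0 ∘ loop_comp = base ∘ pb1 L base base.
Proof. rewrite cmp_assoc, d0c, <- cmp_assoc, pb1_pair, cmp_assoc, d0_incl. reflexivity. Qed.

Lemma d1_loop_comp : d1 ∘ loop_comp = base ∘ pb1 L base base.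
Proof.
  rewrite cmp_assoc, d1c, <- cmp_assoc, pb2_pair, cmp_assoc, d1_incl.
  symmetry. apply pb_comm.
Qed.

Definition loop_mul : hom (pb L base base) Loops :=
  pb_pair L (parallel_factors_diag loop_comp _ d0_loop_comp d1_loop_comp).

Lemma incl_mul {T : C} (a b : hom T Loops) (H : base ∘ a = base ∘ b) :
  incl ∘ (loop_mul ∘ pb_pair L H) = c ∘ pb_pair L (loops_composable a b H).
Proof.
  rewrite cmp_assoc. unfold loop_mul. rewrite pb1_pair, <- cmp_assoc. f_equal.
  symmetry. apply pb_pair_natural; rewrite <- cmp_assoc; [rewrite pb1_pair | rewrite pb2_pair];
    reflexivity.
Qed.

Lemma d0_inv_incl : d0 ∘ (i ∘ incl) = base.
Proof. rewrite cmp_assoc, d0i. exact d1_incl. Qed.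

Lemma d1_inv_incl : d1 ∘ (i ∘ incl) = base.
Proof. rewrite cmp_assoc, d1i. exact d0_incl. Qed.

Definition loop_inv : hom Loops Loops :=
  pb_pair L (parallel_factors_diag (i ∘ incl) base d0_inv_incl d1_inv_incl).

Lemma incl_inv {T : C} (a : hom T Loops) : incl ∘ (loop_inv ∘ a) = i ∘ (incl ∘ a).
Proof. rewrite cmp_assoc. unfold loop_inv. rewrite pb1_pair, cmp_assoc. reflexivity. Qed.

Lemma loops_laws : GroupoidLaws L base base loop_unit loop_mul loop_inv.
Proof.
  destruct E as [Eas Eul Eur Eir Eil].
  split.
  - intros T a b k x y Hab Hbk Hx Hy Ex Ey. apply incl_mono. rewrite !incl_mul.
    apply (Eas _ _ _ _ _ _ (loops_composable a b Hab) (loops_composable b k Hbk));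
      [rewrite Ex | rewrite Ey]; apply incl_mul.
  - intros T a u H Eu. apply incl_mono. rewrite incl_mul. apply Eul.
    rewrite Eu, incl_unit, (cmp_assoc d0 incl a), d0_incl. reflexivity.
  - intros T a v H Ev. apply incl_mono. rewrite incl_mul. apply Eur.
    rewrite Ev, incl_unit, (cmp_assoc d1 incl a), d1_incl. reflexivity.
  - intros T a v H Ev. apply incl_mono. rewrite incl_mul, incl_unit.
    rewrite Eir; [|rewrite Ev; apply incl_inv].
    rewrite (cmp_assoc d0 incl a), d0_incl. reflexivity.
  - intros T a u H Eu. apply incl_mono. rewrite incl_mul, incl_unit.
    rewrite Eil; [|rewrite Eu; apply incl_inv].
    rewrite (cmp_assoc d1 incl a), d1_incl. reflexivity.
Qed.

Definition loop_group : PtGroupData L X0 :=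
  {| pg_A := Loops; pg_f := base; pg_s := loop_unit; pg_m := loop_mul; pg_i := loop_inv;
     pg_fs := pb2_pair _; pg_fm := pb2_pair _; pg_fi := pb2_pair _ |}.

Lemma loop_is_identity (Htriv : AllPtGroupsTrivial L) {T : C} (l : hom T X1) :
  d0 ∘ l = d1 ∘ l -> l = e ∘ (d0 ∘ l).
Proof.
  intro Hl.
  pose proof (Htriv X0 loop_group (pt_group_of_groupoid_laws L loop_group loops_laws)) as Hiso.
  assert (base_mono : is_mono base).
  { apply (mono_of_retraction base loop_unit), (iso_section_retraction base loop_unit Hiso).
    apply pb2_pair. }
  set (l' := pb_pair L (parallel_factors_diag l (d0 ∘ l) eq_refl (eq_sym Hl))).
  assert (Hl' : l' = loop_unit ∘ (d0 ∘ l)).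
  { apply base_mono. unfold l'. rewrite pb2_pair, cmp_assoc. unfold loop_unit.
    rewrite pb2_pair, cmp_id_l. reflexivity. }
  rewrite <- incl_unit, <- Hl'. unfold l'. rewrite pb1_pair. reflexivity.
Qed.

End Loops.

Section Equivalence.
Context {C : Category} (L : FinLim C).

Lemma groupoids_eqrel_of_pt_groups_trivial : AllPtGroupsTrivial L -> AllGroupoidsEqRel L.
Proof.
  intros Htriv G HG.
  destruct (groupoid_laws_of_groupoid L G HG) as [i [d0i [d1i E]]].
  destruct G as [X0 X1 d0 d1 e c d0e d1e d0c d1c]; simpl in *.
  intros T h k Hhk.
  rewrite !pair_comp in Hhk. apply pair_inj in Hhk as [E0 E1].
  assert (Hl : d1 ∘ h = d0 ∘ (i ∘ k)) by (rewrite cmp_assoc, d0i; exact E1).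
  assert (Hik : d1 ∘ (i ∘ k) = d0 ∘ k) by (rewrite cmp_assoc, d1i; reflexivity).
  (* [l = h k^-1] is a loop, hence an identity, and [h = (h k^-1) k = k]. *)
  set (l := c ∘ pb_pair L Hl).
  assert (d0l : d0 ∘ l = d0 ∘ h)
    by (unfold l; rewrite cmp_assoc, d0c, <- cmp_assoc, pb1_pair; reflexivity).
  assert (d1l : d1 ∘ l = d0 ∘ k)
    by (unfold l; rewrite cmp_assoc, d1c, <- cmp_assoc, pb2_pair, cmp_assoc, d1i; reflexivity).
  assert (l_unit : l = e ∘ (d0 ∘ l)).
  { apply (loop_is_identity L d0 d1 e c i d0e d1e d0c d1c d0i d1i E Htriv).
    rewrite d0l, d1l. exact E0. }
  destruct E as [Eas Eul Eur _ Eil].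
  assert (Hh : d1 ∘ h = d0 ∘ (c ∘ pb_pair L Hik))
    by (rewrite cmp_assoc, d0c, <- cmp_assoc, pb1_pair; exact Hl).
  transitivity (c ∘ pb_pair L Hh).
  { symmetry. apply Eur. rewrite (Eil _ _ _ _ eq_refl), E1. reflexivity. }
  transitivity (c ∘ pb_pair L d1l).
  { symmetry. apply (Eas _ h (i ∘ k) k l _ Hl Hik); reflexivity. }
  apply Eul. rewrite l_unit at 1. rewrite d0l, E0. reflexivity.
Qed.

Lemma pt_groups_trivial_of_groupoids_eqrel : AllGroupoidsEqRel L -> AllPtGroupsTrivial L.
Proof.
  intros Heq X G HG.
  pose proof (groupoid_laws_of_pt_group L G HG) as E.
  destruct G as [A f s fs m i fm fi]; simpl in *.
  assert (fm2 : f ∘ m = f ∘ pb2 L f f) by (rewrite fm; apply pb_comm).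
  set (GD := Build_GroupoidData (L := L) fs fs fm fm2).
  pose proof (Heq GD (groupoid_of_groupoid_laws L GD i fi fi E)) as Hmono; simpl in Hmono.
  exists s. split; [|exact fs].
  apply Hmono. rewrite !pair_comp. f_equal; rewrite cmp_assoc, fs, cmp_id_l, cmp_id_r; reflexivity.
Qed.

End Equivalence.

Section Maltsev.
Context {C : Category} (L : FinLim C) (X : C) (p : hom (prod L X (prod L X X)) X)
  (Hp : IsAssocMaltsev p).

Local Notation P a b c := (p ∘ pair3 L a b c).

Lemma pair3_comp {T T' : C} (a b c : hom T X) (t : hom T' T) :
  pair3 L a b c ∘ t = pair3 L (a ∘ t) (b ∘ t) (c ∘ t).
Proof. unfold pair3. rewrite !pair_comp. reflexivity. Qed.

Lemma maltsev_cancel_r {T : C} (a b : hom T X) : P a b b = a.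
Proof.
  destruct Hp as [K _]. pose proof (f_equal (fun h => h ∘ pairP L a b) K) as K'.
  simpl in K'. rewrite <- cmp_assoc, pair3_comp, !pr1_pair, !pr2_pair in K'. exact K'.
Qed.

Lemma maltsev_cancel_l {T : C} (a b : hom T X) : P b b a = a.
Proof.
  destruct Hp as [_ [K _]]. pose proof (f_equal (fun h => h ∘ pairP L b a) K) as K'.
  simpl in K'. rewrite <- cmp_assoc, pair3_comp, !pr1_pair, !pr2_pair in K'. exact K'.
Qed.

Lemma maltsev_assoc {T : C} (a b c d e : hom T X) : P a b (P c d e) = P (P a b c) d e.
Proof.
  destruct Hp as [_ [_ K]]. cbv zeta in K.
  pose proof (f_equal (fun h => h ∘ pairP L a (pairP L b (pairP L c (pairP L d e)))) K) as K'.
  simpl in K'.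
  repeat progress (rewrite <- ?cmp_assoc, ?pair3_comp, ?pr1_pair, ?pr2_pair in K').
  exact K'.
Qed.

Local Notation q1 := (pb1 L (@pr1 C L X X) (@pr1 C L X X)).
Local Notation q2 := (pb2 L (@pr1 C L X X) (@pr1 C L X X)).

Definition heap_unit : hom X (prod L X X) := pairP L (idm X) (idm X).
Definition heap_mul : hom (pb L (@pr1 C L X X) (@pr1 C L X X)) (prod L X X) :=
  pairP L (pr1 L ∘ q1) (P (pr2 L ∘ q1) (pr1 L ∘ q1) (pr2 L ∘ q2)).
Definition heap_inv : hom (prod L X X) (prod L X X) :=
  pairP L (pr1 L) (P (pr1 L) (pr2 L) (pr1 L)).

Lemma pr1_heap_mul {T : C} (a b : hom T (prod L X X)) (H : pr1 L ∘ a = pr1 L ∘ b) :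
  pr1 L ∘ (heap_mul ∘ pb_pair L H) = pr1 L ∘ a.
Proof. unfold heap_mul. rewrite cmp_assoc, pr1_pair, <- cmp_assoc, pb1_pair. reflexivity. Qed.

Lemma pr2_heap_mul {T : C} (a b : hom T (prod L X X)) (H : pr1 L ∘ a = pr1 L ∘ b) :
  pr2 L ∘ (heap_mul ∘ pb_pair L H) = P (pr2 L ∘ a) (pr1 L ∘ a) (pr2 L ∘ b).
Proof.
  unfold heap_mul. rewrite cmp_assoc, pr2_pair, <- cmp_assoc, pair3_comp, <- !cmp_assoc,
    pb1_pair, pb2_pair.
  reflexivity.
Qed.

Lemma pr1_heap_inv {T : C} (a : hom T (prod L X X)) : pr1 L ∘ (heap_inv ∘ a) = pr1 L ∘ a.
Proof. unfold heap_inv. rewrite cmp_assoc, pr1_pair. reflexivity. Qed.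

Lemma pr2_heap_inv {T : C} (a : hom T (prod L X X)) :
  pr2 L ∘ (heap_inv ∘ a) = P (pr1 L ∘ a) (pr2 L ∘ a) (pr1 L ∘ a).
Proof. unfold heap_inv. rewrite cmp_assoc, pr2_pair, <- cmp_assoc, pair3_comp. reflexivity. Qed.

Lemma pr1_heap_unit {T : C} (x : hom T X) : pr1 L ∘ (heap_unit ∘ x) = x.
Proof. unfold heap_unit. rewrite cmp_assoc, pr1_pair, cmp_id_l. reflexivity. Qed.

Lemma pr2_heap_unit {T : C} (x : hom T X) : pr2 L ∘ (heap_unit ∘ x) = x.
Proof. unfold heap_unit. rewrite cmp_assoc, pr2_pair, cmp_id_l. reflexivity. Qed.

Lemma heap_laws : GroupoidLaws L (pr1 L) (pr1 L) heap_unit heap_mul heap_inv.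
Proof.
  split.
  - intros T a b k x y Hab Hbk Hx Hy Ex Ey. apply prod_ext.
    + rewrite !pr1_heap_mul, Ex, pr1_heap_mul. reflexivity.
    + rewrite !pr2_heap_mul, Ex, Ey, pr1_heap_mul, !pr2_heap_mul, <- Hab.
      symmetry. apply maltsev_assoc.
  - intros T a u H Eu. apply prod_ext.
    + rewrite pr1_heap_mul, Eu, pr1_heap_unit. reflexivity.
    + rewrite pr2_heap_mul, Eu, pr1_heap_unit, pr2_heap_unit. apply maltsev_cancel_l.
  - intros T a v H Ev. apply prod_ext.
    + apply pr1_heap_mul.
    + rewrite pr2_heap_mul, Ev, pr2_heap_unit. apply maltsev_cancel_r.
  - intros T a v H Ev. apply prod_ext.
    + rewrite pr1_heap_mul, pr1_heap_unit. reflexivity.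
    + rewrite pr2_heap_mul, Ev, pr2_heap_unit, pr2_heap_inv, maltsev_assoc,
        maltsev_cancel_r, maltsev_cancel_l.
      reflexivity.
  - intros T a u H Eu. apply prod_ext.
    + rewrite pr1_heap_mul, pr1_heap_unit, Eu, pr1_heap_inv. reflexivity.
    + rewrite pr2_heap_mul, pr2_heap_unit, Eu, pr1_heap_inv, pr2_heap_inv, <- maltsev_assoc,
        maltsev_cancel_l, maltsev_cancel_r.
      reflexivity.
Qed.

Definition heap_group : PtGroupData L X :=
  {| pg_A := prod L X X; pg_f := pr1 L; pg_s := heap_unit; pg_m := heap_mul;
     pg_i := heap_inv; pg_fs := pr1_pair _ _; pg_fm := pr1_pair _ _;
     pg_fi := pr1_pair _ _ |}.

Lemma subterminal_of_assoc_maltsev : AllPtGroupsTrivial L -> subterminal L X.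
Proof.
  intro Htriv.
  pose proof (Htriv X heap_group (pt_group_of_groupoid_laws L heap_group heap_laws)) as Hiso.
  assert (pr1_mono : is_mono (@pr1 C L X X)).
  { apply (mono_of_retraction _ heap_unit), (iso_section_retraction _ _ Hiso).
    apply pr1_pair. }
  intros T h k _.
  apply (pair_inj (L := L) h h h k), pr1_mono. rewrite !pr1_pair. reflexivity.
Qed.

End Maltsev.

Theorem mainTheorem12 (C : Category) (L : FinLim C) :
  (AllPtGroupsTrivial L <-> AllGroupoidsEqRel L) /\
  (AllPtGroupsTrivial L ->
     forall (X : C) (p : hom (prod L X (prod L X X)) X),
       IsAssocMaltsev p -> subterminal L X).
Proof.
  split.
  - split.
    + apply groupoids_eqrel_of_pt_groups_trivial.
    + apply pt_groups_trivial_of_groupoids_eqrel.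
  - intros Htriv X p Hp. exact (subterminal_of_assoc_maltsev L X p Hp Htriv).
Qed.
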